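(* For every block $i\in\{1,\dots,N\}$ and battery state $\epsilon$: (1) For any H-channel state $\gamma_H$ for which $\alpha=1$ is optimal in block $i$ at some state $\langle\epsilon,\gamma_G,\gamma_H\rangle$, let $\Gamma_{G,i}(\epsilon,\gamma_H)$ be the largest G-channel state $\gamma_G$ for which $\alpha=1$ is optimal in block $i$ at $\langle\epsilon,\gamma_G,\gamma_H\rangle$. Then $u_i^*(\langle\epsilon,\gamma_G,\gamma_H\rangle)=u_i^*(\langle\epsilon,\Gamma_{G,i}(\epsilon,\gamma_H),\gamma_H\rangle)$ for all $\gamma_G\le\Gamma_{G,i}(\epsilon,\gamma_H)$. (2) For any G-channel state $\gamma_G$, let $\Gamma_{H,i}(\epsilon,\gamma_G)$ be the smallest H-channel state $\gamma_H$ for which $\alpha=1$ is optimal in block $i$ at $\langle\epsilon,\gamma_G,\gamma_H\rangle$, and suppose $\tilde\Gamma_{H,i}(\epsilon,\gamma_G)=\max\{H_k: H_k<\Gamma_{H,i}(\epsilon,\gamma_G)\}$ exists. Then $u_i^*(\langle\epsilon,\gamma_G,\gamma_H\rangle)=u_i^*(\langle\epsilon,\gamma_G,\tilde\Gamma_{H,i}(\epsilon,\gamma_G)\rangle)$ for all $\gamma_H\le\tilde\Gamma_{H,i}(\epsilon,\gamma_G)$.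
   Context: Finite-horizon MDP with $N$ blocks of length $\tau>0$. Parameters: $B_m>0$, positive integers $M,K$; channel levels $0<H_1<\dots<H_K$; $R,W,\sigma^2,g_0,\theta,d_G,d_H>0$; $p_G^{\max},p_H^{\max}>0$; weights $w_G,w_D>0$; $E_{H}$ a random variable with density $f_{E_H}$ on $[0,E_m]$. A state is $s=\langle\epsilon,\gamma_G,\gamma_H\rangle$ with $\epsilon\in\{(2m-1)B_m/(2M): m=1,\dots,M\}$ and $\gamma_G,\gamma_H\in\{H_1,\dots,H_K\}$. Let $p^{inv}_j(s)=(2^{R/(W\tau)}-1)\sigma^2(g_0 d_j^{-\theta}\gamma_j)^{-1}$ for $j\in\{G,H\}$, $\kappa=\min\{p_G^{\max},w_D(w_G\tau)^{-1}\}$, and $c(s)=w_D$ if $p^{inv}_G(s)>\kappa$, $c(s)=w_G p^{inv}_G(s)\tau$ otherwise. The allowable actions are $\mathcal{A}_s=\{0\}$ if $p^{inv}_H(s)>\min\{\epsilon/\tau,p_H^{\max}\}$ and $\mathcal{A}_s=\{0,1\}$ otherwise; the cost is $c(s,\alpha)=(1-\alpha)c(s)$. Transitions: given $s$ and $\alpha$, the next channel states $\gamma_G',\gamma_H'$ are independent, each uniform on $\{H_1,\dots,H_K\}$, independent of the next energy state $\epsilon'=Q(\epsilon-\alpha p^{inv}_H(s)\tau+E_H)$, where $Q(\varepsilon)=\big(2\min\{\lfloor M\min\{\varepsilon,B_m\}/B_m\rfloor+1,M\}-1\big)B_m/(2M)$; denote the resulting transition probability $p(s'|s,\alpha)$.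 Optimal cost-to-go functions: $u_N^*(s)=\min_{\alpha\in\mathcal{A}_s}c(s,\alpha)$ and, for $i<N$, $u_i^*(s)=\min_{\alpha\in\mathcal{A}_s}\{c(s,\alpha)+\sum_{s'}p(s'|s,\alpha)u_{i+1}^*(s')\}$. Action $\alpha$ is optimal in block $i$ at state $s$ if $\alpha\in\mathcal{A}_s$ and it attains the minimum in the defining equation of $u_i^*(s)$. *)

From HB Require Import structures.
From mathcomp Require Import all_boot all_order all_algebra.
From mathcomp Require Import all_classical all_reals all_analysis.
Set Implicit Arguments. Unset Strict Implicit. Unset Printing Implicit Defensive.
Import Order.TTheory GRing.Theory Num.Theory.
Local Open Scope ring_scope.
Local Open Scope classical_set_scope.

(* All model parameters.  Energy levels are indexed by m : 'I_M (level m
   corresponds to the paper's m+1), channel levels by k : 'I_K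
   (Hlev k corresponds to H_{k+1}). *)
Record mdp_params (R : realType) := MdpParams {
  N : nat;
  tau : R;
  Bm : R;
  M : nat;
  K : nat;
  Hlev : 'I_K -> R;
  Rate : R; Wb : R; sigma2 : R; g0 : R; theta : R; dG : R; dH : R;
  pGmax : R; pHmax : R; wG : R; wD : R;
  Em : R;
  fEH : R -> R
}.

Definition valid_params (R : realType) (P : mdp_params R) : Prop :=
  [/\ [/\ 0 < P.(tau), 0 < P.(Bm), (0 < P.(M))%N & (0 < P.(K))%N],
      (forall k, 0 < P.(Hlev) k) /\
      (forall k l : 'I_P.(K), (k < l)%N -> P.(Hlev) k < P.(Hlev) l),
      [/\ 0 < P.(Rate), 0 < P.(Wb), 0 < P.(sigma2), 0 < P.(g0) &
          [/\ 0 < P.(theta), 0 < P.(dG) & 0 < P.(dH)]],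
      [/\ 0 < P.(pGmax), 0 < P.(pHmax), 0 < P.(wG), 0 < P.(wD) & 0 < P.(Em)] &
      [/\ measurable_fun setT P.(fEH),
          (forall x, 0 <= P.(fEH) x),
          (forall x, (x < 0 \/ P.(Em) < x) -> P.(fEH) x = 0) &
          (\int[lebesgue_measure]_x (P.(fEH) x)%:E = 1)%E]].

Section Model.
Variables (R : realType) (P : mdp_params R).

Definition state : finType := ('I_P.(M) * 'I_P.(K) * 'I_P.(K))%type.

Definition eps (m : 'I_P.(M)) : R :=
  (2 * m + 1)%:R * P.(Bm) / (2 * P.(M))%:R.

Definition eps_of (s : state) : R := eps s.1.1.
Definition gG_of (s : state) : R := P.(Hlev) s.1.2.
Definition gH_of (s : state) : R := P.(Hlev) s.2.

Definition Qz (x : R) : R :=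
  let idx : int :=
    Num.min (Num.floor (P.(M)%:R * Num.min x P.(Bm) / P.(Bm)) + 1) P.(M)%:Z in
  (2 * idx - 1)%:~R * P.(Bm) / (2 * P.(M))%:R.

Definition pinv (d gamma : R) : R :=
  (powR 2 (P.(Rate) / (P.(Wb) * P.(tau))) - 1) * P.(sigma2)
  / (P.(g0) * powR d (- P.(theta)) * gamma).

Definition pinvG (s : state) : R := pinv P.(dG) (gG_of s).
Definition pinvH (s : state) : R := pinv P.(dH) (gH_of s).

Definition kappa : R := Num.min P.(pGmax) (P.(wD) / (P.(wG) * P.(tau))).

Definition cs (s : state) : R :=
  if kappa < pinvG s then P.(wD) else P.(wG) * pinvG s * P.(tau).

(* actions: false = 0, true = 1 ; alpha = 1 allowed iff
   pinvH s <= min (eps/tau) pHmax *)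
Definition allowed (s : state) (a : bool) : bool :=
  if a then pinvH s <= Num.min (eps_of s / P.(tau)) P.(pHmax) else true.

Definition cost (s : state) (a : bool) : R := if a then 0 else cs s.

Definition pE (s : state) (a : bool) (m' : 'I_P.(M)) : R :=
  fine (\int[lebesgue_measure]_(x in
          [set x | Qz (eps_of s - (if a then pinvH s * P.(tau) else 0) + x)
                   = eps m'])
          (P.(fEH) x)%:E).

(* p(s'|s,a): channels i.i.d. uniform, independent of energy *)
Definition trans (s : state) (a : bool) (s' : state) : R :=
  pE s a s'.1.1 / (P.(K)%:R ^+ 2).

Definition minA (s : state) (F : bool -> R) : R :=
  if allowed s true then Num.min (F false) (F true) else F false.

(* V j = optimal cost-to-go with j blocks remaining after the current one *)
Fixpoint V (j : nat) (s : state) : R :=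
  match j with
  | 0 => minA s (cost s)
  | j'.+1 => minA s (fun a => cost s a + \sum_(s' : state) trans s a s' * V j' s')
  end.

Definition u (i : nat) (s : state) : R := V (P.(N) - i) s.

Definition Qval (i : nat) (s : state) (a : bool) : R :=
  if (i < P.(N))%N then cost s a + \sum_(s' : state) trans s a s' * u i.+1 s'
  else cost s a.

Definition optimal (i : nat) (s : state) (a : bool) : Prop :=
  allowed s a /\ Qval i s a = u i s.

End Model.

Arguments optimal {R} P i s a.
Arguments u {R} P i s.
Arguments Qval {R} P i s a.
Arguments V {R} P j s.
Arguments Hlev {R} m _.

(* Action 1 costs nothing and its successor distribution only involves the
   battery level and the H-channel, so its Q-value does not depend on
   gamma_G; the Q-value of action 0 does not depend on gamma_H and is
   nonincreasing in gamma_G (the required G-power decreases as the channel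
   improves).  Hence (1): once action 1 beats action 0 at Gamma_G, it beats it
   at every worse G-channel, where it then has the same value.  And (2): below
   Gamma_H action 1 is not optimal, so u_i^* is the Q-value of action 0,
   which is the same for all these H-channels. *)
From Pilot Require Import Defs.
From HB Require Import structures.
From mathcomp Require Import all_boot all_order all_algebra.
From mathcomp Require Import all_classical all_reals all_analysis.
Import Order.TTheory GRing.Theory Num.Theory.
Local Open Scope ring_scope.

Section Proposition4.
Local Set Implicit Arguments.
Local Unset Strict Implicit.
Variables (R : realType) (P : mdp_params R).
Hypothesis vp : valid_params P.

Lemma u_minA_Qval i (s : state P) : u P i s = Defs.minA s (Qval P i s).
Proof.
rewrite /u /Qval; case: ltnP => [lt_iN | le_Ni].
  by rewrite -subnSK.
by move: le_Ni; rewrite -subn_eq0 => /eqP ->.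
Qed.

Lemma optimal_true_le i (s : state P) :
  optimal P i s true -> Qval P i s true <= Qval P i s false.
Proof.
by case=> al; rewrite u_minA_Qval /Defs.minA al => ->; rewrite ge_min lexx.
Qed.

Lemma u_not_optimal_true i (s : state P) :
  ~ optimal P i s true -> u P i s = Qval P i s false.
Proof.
move=> not_opt; rewrite u_minA_Qval /Defs.minA; case: ifPn => // al.
have [// | lt_true] := lerP (Qval P i s false) (Qval P i s true).
by exfalso; apply: not_opt; rewrite /optimal u_minA_Qval /Defs.minA al min_r ?ltW.
Qed.

Lemma pinv_nonincreasing (d a b : R) :
  0 < d -> 0 < a -> a <= b -> @Defs.pinv R P d b <= @Defs.pinv R P d a.
Proof.
case: vp => [[t0 _ _ _]] _ [r0 w0 s0 g00 _] _ _ d0 a0 ab.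
have pow_ge1 : 1 <= powR 2 (Rate P / (Wb P * tau P)).
  rewrite -[leLHS](powRr0 2) ler_powR ?ler1n //.
  by rewrite divr_ge0 ?mulr_ge0 ?ltW.
have dpow0 : 0 < d `^ (- theta P) by exact: powR_gt0.
rewrite /pinv; apply: ler_wpM2l; first by rewrite mulr_ge0 ?subr_ge0 // ltW.
have b0 : 0 < b := lt_le_trans a0 ab.
rewrite lef_pV2 ?posrE ?mulr_gt0 //.
by rewrite ler_wpM2l // ltW ?mulr_gt0.
Qed.

Lemma cs_le_of_pinvG_le (s s' : state P) : pinvG s' <= pinvG s -> cs s' <= cs s.
Proof.
case: vp => [[t0 _ _ _]] _ _ [_ _ wG0 wD0 _] _ le_pinv.
rewrite /cs; case: ifPn => lt1; case: ifPn => lt2 //.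
- by rewrite (lt_le_trans lt1 le_pinv) in lt2.
- have : pinvG s' <= wD P / (wG P * tau P).
    by rewrite -leNgt in lt1; apply: le_trans lt1 _; rewrite ge_min lexx orbT.
  by rewrite ler_pdivlMr ?mulr_gt0 // => le_wD; rewrite mulrAC mulrC.
- by apply: ler_wpM2r; [exact: ltW | apply: ler_wpM2l => //; exact: ltW].
Qed.

Lemma Qval_false_le_gG i m (g g' h : 'I_(K P)) :
  Hlev P g <= Hlev P g' -> Qval P i (m, g', h) false <= Qval P i (m, g, h) false.
Proof.
case: (vp) => _ [Hlev_gt0 _] [_ _ _ _ [_ dG0 _]] _ _ le_g.
have le_cs : cs (m, g', h) <= cs (m, g, h).
  by apply/cs_le_of_pinvG_le/pinv_nonincreasing; rewrite ?Hlev_gt0.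
by rewrite /Qval; case: ifP => _; rewrite ?lerD.
Qed.

Lemma Qval_true_gG i m (g g' h : 'I_(K P)) :
  Qval P i (m, g, h) true = Qval P i (m, g', h) true.
Proof. by []. Qed.

Lemma Qval_false_gH i m (g h h' : 'I_(K P)) :
  Qval P i (m, g, h) false = Qval P i (m, g, h') false.
Proof. by []. Qed.

End Proposition4.

Theorem proposition4 (R : realType) (P : mdp_params R) :
  valid_params P ->
  forall i : nat, (1 <= i <= N P)%N ->
  forall m : 'I_(M P),
  (* (1) *)
  (forall (gH GamG : 'I_(K P)),
     optimal P i (m, GamG, gH) true ->
     (forall g, optimal P i (m, g, gH) true -> Hlev P g <= Hlev P GamG) ->
     forall g, Hlev P g <= Hlev P GamG ->
       u P i (m, g, gH) = u P i (m, GamG, gH))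
  /\
  (* (2) *)
  (forall (gG GamH GamHt : 'I_(K P)),
     optimal P i (m, gG, GamH) true ->
     (forall h, optimal P i (m, gG, h) true -> Hlev P GamH <= Hlev P h) ->
     Hlev P GamHt < Hlev P GamH ->
     (forall k, Hlev P k < Hlev P GamH -> Hlev P k <= Hlev P GamHt) ->
     forall h, Hlev P h <= Hlev P GamHt ->
       u P i (m, gG, h) = u P i (m, gG, GamHt)).
Proof.
move=> vp i _ m; split.
  move=> gH GamG opt_GamG _ g le_g.
  have [al_GamG opt_val] := opt_GamG.
  have al_g : allowed (m, g, gH) true := al_GamG.
  have true_le_false : Qval P i (m, g, gH) true <= Qval P i (m, g, gH) false.
    rewrite (Qval_true_gG i m g GamG gH).
    exact: le_trans (optimal_true_le opt_GamG) (Qval_false_le_gG vp i m gH le_g).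
  rewrite -opt_val u_minA_Qval /Defs.minA al_g (min_r true_le_false).
  exact: Qval_true_gG i m g GamG gH.
move=> gG GamH GamHt _ GamH_min lt_GamHt _ h le_h.
have below_GamH k :
    Hlev P k < Hlev P GamH -> u P i (m, gG, k) = Qval P i (m, gG, k) false.
  by move=> lt_k; apply: u_not_optimal_true => /GamH_min; rewrite leNgt lt_k.
rewrite (below_GamH h (le_lt_trans le_h lt_GamHt)) (below_GamH GamHt lt_GamHt).
exact: Qval_false_gH i m gG h GamHt.
Qed.
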